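(* Let $X$ be a pure $d$-dimensional simplicial complex, $1\le k\le d-1$, and $c\in X(k-1)$. Then the link $X_c$ is isomorphic to $R_c(X)$.
   Context: $X(j)$ = faces with $j+1$ elements; $X_c=\{\tau\setminus c:c\subseteq\tau\in X\}$. The representation complex $R_k(X)$ has vertex set $X(k)$ and, for $1\le i\le d-k$, $i$-faces the sets $S$ of $i+1$ distinct elements of $X(k)$ with $\bigcup S\in X(i+k)$ and $|\bigcap S|=k$; the core of such $S$ is $\bigcap S$. $R_c(X)$ is the complex consisting of $\emptyset$, the vertices $\{\tau\}$ with $\tau\in X(k)$, $c\subseteq\tau$, and all faces of $R_k(X)$ of dimension $\ge1$ whose core is $c$. Two complexes are isomorphic if there is a bijection between their faces preserving inclusion in both directions. *)

From mathcomp Require Import all_boot.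
Set Implicit Arguments. Unset Strict Implicit. Unset Printing Implicit Defensive.

Definition is_complex (T : finType) (X : {set {set T}}) : Prop :=
  set0 \in X /\
  (forall s t : {set T}, s \in X -> t \subset s -> t \in X).

Definition faces_of_dim (T : finType) (X : {set {set T}}) (j : nat) : {set {set T}} :=
  [set s in X | #|s| == j.+1].

Definition pure_dim (T : finType) (X : {set {set T}}) (d : nat) : Prop :=
  (forall s, s \in X -> #|s| <= d.+1) /\
  (forall s, s \in X -> exists2 t, t \in faces_of_dim X d & s \subset t).

Definition link (T : finType) (X : {set {set T}}) (c : {set T}) : {set {set T}} :=
  [set t :\: c | t in [set t in X | c \subset t]].

Definition Rk_iface (T : finType) (X : {set {set T}}) (d k i : nat)
    (S : {set {set T}}) : bool :=
  [&& 1 <= i, i <= d - k, #|S| == i.+1, S \subset faces_of_dim X k,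
      (\bigcup_(s in S) s) \in faces_of_dim X (i + k)
    & #|\bigcap_(s in S) s| == k].

Definition Rk_face (T : finType) (X : {set {set T}}) (d k : nat)
    (S : {set {set T}}) : bool :=
  [exists i : 'I_d.+1, Rk_iface X d k i S].

Definition core (T : finType) (S : {set {set T}}) : {set T} :=
  \bigcap_(s in S) s.

Definition Rc (T : finType) (X : {set {set T}}) (d k : nat) (c : {set T})
    : {set {set {set T}}} :=
  set0 |: ([set [set t] | t in [set t in faces_of_dim X k | c \subset t]]
      :|: [set S | Rk_face X d k S && (core S == c)]).

Definition complex_iso (T U : finType) (A : {set {set T}}) (B : {set {set U}}) : Prop :=
  exists f : {set T} -> {set U},
    [/\ {in A &, injective f}, f @: A = B
      & forall s t, s \in A -> t \in A -> (s \subset t) = (f s \subset f t)].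

(** The isomorphism sends a face [s] of the link [X_c] to the set of
    [k]-faces [v |: c], [v \in s].  When [s] has at least two vertices these
    [k]-faces all meet exactly in [c] and their union is the face [c :|: s]
    of [X]; so they form a face of [R_k(X)] with core [c], of dimension
    [#|s| - 1].  Conversely every face of [R_c(X)] consists of [k]-faces
    containing [c], hence of one-vertex extensions of [c], and it is recovered
    from its union minus [c]. *)

From mathcomp Require Import all_boot zify.
Set Implicit Arguments. Unset Strict Implicit. Unset Printing Implicit Defensive.

Lemma setUD_subset (T : finType) (A B : {set T}) :
  A \subset B -> A :|: (B :\: A) = B.
Proof. by move=> AB; rewrite -{1}(setIidPr AB) setID. Qed.

Section Extensions.

Variables (T : finType) (c : {set T}).

Definition extensions (s : {set T}) : {set {set T}} := [set v |: c | v in s].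

Lemma setU1_inj v w : v \notin c -> v |: c = w |: c -> v = w.
Proof.
move=> vNc vcE; have : v \in w |: c by rewrite -vcE setU11.
by rewrite in_setU1 (negbTE vNc) orbF => /eqP.
Qed.

Lemma mem_extensions (s : {set T}) v :
  v \notin c -> (v |: c \in extensions s) = (v \in s).
Proof.
move=> vNc; apply/imsetP/idP => [[w ws /(setU1_inj vNc) ->] // | vs].
by exists v.
Qed.

Lemma extensions_subset (s t : {set T}) :
  [disjoint s & c] -> (extensions s \subset extensions t) = (s \subset t).
Proof.
move=> dsc; apply/idP/idP => [/subsetP sub_st | ]; last exact: imsetS.
apply/subsetP => v vs; have vNc : v \notin c by rewrite (disjointFr dsc).
by rewrite -(mem_extensions t vNc) sub_st ?mem_extensions.
Qed.

Lemma extensions_inj :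
  {in [pred s : {set T} | [disjoint s & c]] &, injective extensions}.
Proof.
move=> s t dsc dtc est; apply/eqP.
rewrite eqEsubset -(extensions_subset t dsc) -(extensions_subset s dtc).
by rewrite est subxx.
Qed.

Lemma card_extensions (s : {set T}) :
  [disjoint s & c] -> #|extensions s| = #|s|.
Proof.
move=> dsc; apply: card_in_imset => v w vs _.
by apply: setU1_inj; rewrite (disjointFr dsc).
Qed.

Lemma bigcup_extensions (s : {set T}) :
  s != set0 -> \bigcup_(x in extensions s) x = c :|: s.
Proof.
move=> /set0Pn[v0 v0s]; apply/setP => x; apply/bigcupP/idP.
  case=> _ /imsetP[v vs ->]; rewrite in_setU1 inE.
  by case/orP=> [/eqP-> | ->]; rewrite ?vs ?orbT.
rewrite inE => /orP[xc | xs].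
  by exists (v0 |: c); [exact: imset_f | rewrite setU1r].
by exists (x |: c); [exact: imset_f | rewrite setU11].
Qed.

(* Two distinct one-vertex extensions of [c] already intersect in [c]. *)
Lemma bigcap_extensions (s : {set T}) :
  1 < #|s| -> \bigcap_(x in extensions s) x = c.
Proof.
case/card_gt1P => v [w [vs ws vNw]]; apply/setP => x; apply/bigcapP/idP.
  move=> inall; have := inall _ (imset_f _ vs); have := inall _ (imset_f _ ws).
  rewrite !in_setU1 => /orP[/eqP xw | //] /orP[/eqP xv | //].
  by move: vNw; rewrite -xv -xw eqxx.
by move=> xc _ /imsetP[u _ ->]; rewrite setU1r.
Qed.

Lemma one_vertex_extension (t : {set T}) :
  c \subset t -> #|t| = #|c|.+1 -> exists2 v, v \notin c & t = v |: c.
Proof.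
move=> ct card_t; have /cards1P[v tDc] : #|t :\: c| == 1.
  by rewrite cardsDS // card_t subSnn.
have : v \in t :\: c by rewrite tDc set11.
rewrite inE => /andP[vNc _]; exists v => //.
by rewrite -{1}(setUD_subset ct) tDc setUC.
Qed.

Lemma extensions_bigcup (S : {set {set T}}) :
  (forall t, t \in S -> c \subset t /\ #|t| = #|c|.+1) ->
  extensions ((\bigcup_(t in S) t) :\: c) = S.
Proof.
move=> ext_S; apply/setP => t; apply/imsetP/idP.
  case=> v; rewrite inE => /andP[vNc /bigcupP[u uS vu]] ->.
  have [cu card_u] := ext_S u uS; have [w _ uE] := one_vertex_extension cu card_u.
  by move: vu; rewrite uE in_setU1 (negbTE vNc) orbF => /eqP->; rewrite -uE.
move=> tS; have [ct card_t] := ext_S t tS.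
have [v vNc tE] := one_vertex_extension ct card_t; exists v => //.
by rewrite inE vNc; apply/bigcupP; exists t; rewrite // tE setU11.
Qed.

End Extensions.

Section Link.

Variables (T : finType) (X : {set {set T}}) (c : {set T}).

Lemma linkP (s : {set T}) :
  reflect ([disjoint s & c] /\ c :|: s \in X) (s \in link X c).
Proof.
apply: (iffP imsetP) => [[t] | [dsc csX]].
  rewrite inE => /andP[tX ct] ->; split; last by rewrite setUD_subset.
  by apply/setDidPl; rewrite setDDl setUid.
exists (c :|: s); first by rewrite inE csX subsetUl.
by rewrite setDUl setDv set0U; apply/esym/setDidPl.
Qed.

Lemma link_disjoint (s : {set T}) : s \in link X c -> [disjoint s & c].
Proof. by case/linkP. Qed.

Lemma link_setD t : t \in X -> c \subset t -> t :\: c \in link X c.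
Proof. by move=> tX ct; apply: imset_f; rewrite inE tX ct. Qed.

End Link.

Section RepresentationComplex.

Variables (T : finType) (X : {set {set T}}) (d k : nat) (c : {set T}).

Hypothesis X_down : forall s t : {set T}, s \in X -> t \subset s -> t \in X.
Hypothesis X_bounded : forall s, s \in X -> #|s| <= d.+1.
Hypothesis cX : c \in X.
Hypothesis card_c : #|c| = k.

Lemma extension_in_faces_of_dim (s : {set T}) v :
  c :|: s \in X -> v \in s -> v \notin c -> v |: c \in faces_of_dim X k.
Proof.
move=> csX vs vNc; rewrite inE cardsU1 vNc card_c eqxx andbT.
by apply: X_down csX _; rewrite setUC setUS // sub1set.
Qed.

Lemma extensions_Rk_face (s : {set T}) :
  [disjoint s & c] -> c :|: s \in X -> 1 < #|s| ->
  Rk_face X d k (extensions c s).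
Proof.
move=> dsc csX s_gt1.
have card_cs : #|c :|: s| = k + #|s|.
  by rewrite cardsU setIC (disjoint_setI0 dsc) cards0 subn0 card_c.
have := X_bounded csX; rewrite card_cs => cs_le.
have i_lt : #|s|.-1 < d.+1 by lia.
apply/existsP; exists (Ordinal i_lt); rewrite /Rk_iface /=.
have s0 : s != set0 by rewrite -card_gt0 ltnW.
rewrite card_extensions // bigcup_extensions // bigcap_extensions // card_c.
have cs_face : c :|: s \in faces_of_dim X (#|s|.-1 + k).
  by rewrite inE csX card_cs; apply/eqP; lia.
have ext_faces : extensions c s \subset faces_of_dim X k.
  apply/subsetP => _ /imsetP[v vs ->].
  by apply: (extension_in_faces_of_dim csX vs); rewrite (disjointFr dsc vs).
rewrite cs_face ext_faces eqxx !andbT; apply/and3P; split; lia.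
Qed.

Lemma extensions_in_Rc (s : {set T}) :
  s \in link X c -> extensions c s \in Rc X d k c.
Proof.
case/linkP => dsc csX; rewrite /Rc.
have [-> | s0] := eqVneq s set0; first by rewrite /extensions imset0 setU11.
case: (eqVneq #|s| 1) => [/eqP/cards1P[v sE] | s_ne1].
  have vNc : v \notin c by rewrite (disjointFr dsc) // sE set11.
  rewrite sE /extensions imset_set1.
  apply/setU1P; right; apply/setUP; left; apply: imset_f.
  rewrite inE subsetUr andbT; apply: (extension_in_faces_of_dim csX _ vNc).
  by rewrite sE set11.
have s_gt1 : 1 < #|s| by rewrite ltn_neqAle eq_sym s_ne1 card_gt0.
apply/setU1P; right; apply/setUP; right.
by rewrite inE extensions_Rk_face //= /core bigcap_extensions.
Qed.

Lemma extensions_of_bigcup (S : {set {set T}}) t0 :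
  t0 \in S -> (forall t, t \in S -> c \subset t /\ #|t| = #|c|.+1) ->
  \bigcup_(t in S) t \in X -> exists2 s, s \in link X c & S = extensions c s.
Proof.
move=> t0S ext_S UX; exists ((\bigcup_(t in S) t) :\: c).
  exact: link_setD UX (subset_trans (proj1 (ext_S _ t0S)) (bigcup_sup _ t0S)).
by rewrite extensions_bigcup.
Qed.

Lemma Rc_extensions (S : {set {set T}}) :
  S \in Rc X d k c -> exists2 s, s \in link X c & S = extensions c s.
Proof.
rewrite /Rc => /setU1P[-> | /setUP[/imsetP[tau] | ]].
- exists set0; last by rewrite /extensions imset0.
  by rewrite -(setDv c) link_setD.
- rewrite !inE => /andP[/andP[tauX /eqP card_tau] ctau] ->.
  apply: (extensions_of_bigcup (set11 tau)); last by rewrite big_set1.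
  by move=> t /set1P->; rewrite card_c.
rewrite inE => /andP[/existsP[i]] /andP[_ /andP[_ /andP[/eqP card_S]]].
case/andP=> /subsetP S_faces /andP[UX _] /eqP core_S.
have [t0 t0S] : exists t0, t0 \in S by apply/card_gt0P; rewrite card_S.
apply: (extensions_of_bigcup t0S); last by move: UX; rewrite inE => /andP[].
move=> t tS; split; first by rewrite -core_S; exact: bigcap_inf.
by have := S_faces t tS; rewrite inE card_c => /andP[_ /eqP].
Qed.

End RepresentationComplex.

Theorem mainTheorem14 (T : finType) (X : {set {set T}}) (d k : nat)
    (c : {set T}) :
  is_complex X -> pure_dim X d ->
  1 <= k -> k <= d.-1 ->
  c \in faces_of_dim X k.-1 ->
  complex_iso (link X c) (Rc X d k c).
Proof.
(* Neither [k <= d.-1] nor the existence of facets is needed. *)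
move=> [_ X_down] [X_bounded _] k_gt0 _.
rewrite inE => /andP[cX /eqP]; rewrite prednK // => card_c.
exists (extensions c); split.
- by move=> s t /link_disjoint dsc /link_disjoint dtc; apply: extensions_inj.
- apply/eqP; rewrite eqEsubset; apply/andP; split; apply/subsetP => S.
    by case/imsetP=> s sl ->; apply: extensions_in_Rc.
  by case/(Rc_extensions cX card_c) => s sl ->; apply: imset_f.
- by move=> s t /link_disjoint dsc _; rewrite extensions_subset.
Qed.
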